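(* Let $f,g\in\mathcal F^{\,r}_{op}$ and suppose $\tilde g(x)\le\tilde f(x)$ for all $x>0$. Then for every $n$, every faithful $\rho\in\mathcal D_n^1$ and every self-adjoint $A\in M_n(\mathbb C)$, $$I^f_\rho(A)\le I^g_\rho(A).$$
   Context: $\mathcal F_{op}$ is the class of functions $f:(0,\infty)\to(0,\infty)$ that are operator monotone, satisfy $f(1)=1$ and $tf(t^{-1})=f(t)$ for all $t>0$. $f(0):=\lim_{x\to0^+}f(x)$, and $\mathcal F^{\,r}_{op}=\{f\in\mathcal F_{op}: f(0)\neq0\}$. For $f\in\mathcal F^{\,r}_{op}$ and $x>0$, $\tilde f(x):=\frac12\big[(x+1)-(x-1)^2\frac{f(0)}{f(x)}\big]$. $\mathcal D_n^1$ is the set of strictly positive $n\times n$ density matrices. For $x,y>0$, $m_f(x,y)=xf(y/x)$; $L_\rho(X)=\rho X$, $R_\rho(X)=X\rho$, and $m_f(L_\rho,R_\rho)$ multiplies the entry $X_{ij}$ of $X$ (in an orthonormal eigenbasis of $\rho$ with eigenvalues $\lambda_i$) by $m_f(\lambda_i,\lambda_j)$. $\|X\|^2_{\rho,f}=\mathrm{Tr}\big(X^* m_f(L_\rho,R_\rho)^{-1}(X)\big)$. The $f$-information is $I^f_\rho(A)=\frac{f(0)}{2}\|i[\rho,A]\|^2_{\rho,f}$. *)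

From HB Require Import structures.
From mathcomp Require Import all_boot all_order all_algebra.
From mathcomp Require Import sesquilinear spectral.
From mathcomp Require Import complex.
From mathcomp Require Import all_classical all_reals all_analysis.
Set Implicit Arguments. Unset Strict Implicit. Unset Printing Implicit Defensive.
Import Order.TTheory GRing.Theory Num.Theory.
Import numFieldNormedType.Exports.
Local Open Scope ring_scope.
Local Open Scope sesquilinear_scope.
Local Open Scope complex_scope.
Local Open Scope classical_set_scope.

Section Defs.
Variable R : realType.
Local Notation C := R[i].

Definition adj {m n} (M : 'M[C]_(m, n)) : 'M[C]_(n, m) := M ^t*.

Definition selfadjoint {n} (M : 'M[C]_n) : Prop := adj M = M.

(* positive semidefinite: <v, M v> is a nonnegative real for all v
   (the order on C = R[i] is: x <= y iff y - x is a nonnegative real) *)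
Definition psd {n} (M : 'M[C]_n) : Prop :=
  forall v : 'rV[C]_n, 0 <= (v *m M *m adj v) 0 0.

Definition pd {n} (M : 'M[C]_n) : Prop :=
  forall v : 'rV[C]_n, v != 0 -> 0 < (v *m M *m adj v) 0 0.

Definition loewner_le {n} (A B : 'M[C]_n) : Prop := psd (B - A).

Definition rdiag {n} (d : 'I_n -> R) : 'M[C]_n := diag_mx (\row_i (d i)%:C).

(* functional calculus: for U unitary and d real, f(U diag(d) U^* ) = U diag(f o d) U^* *)
Definition fcalc {n} (f : R -> R) (U : 'M[C]_n) (d : 'I_n -> R) : 'M[C]_n :=
  U *m rdiag (fun i => f (d i)) *m adj U.

Definition operator_monotone (f : R -> R) : Prop :=
  forall (m : nat) (U V : 'M[C]_m) (d e : 'I_m -> R),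
    U \is unitarymx -> V \is unitarymx ->
    (forall i, 0 < d i) -> (forall i, 0 < e i) ->
    loewner_le (U *m rdiag d *m adj U) (V *m rdiag e *m adj V) ->
    loewner_le (fcalc f U d) (fcalc f V e).

Definition Fop (f : R -> R) : Prop :=
  [/\ (forall x, 0 < x -> 0 < f x),
      operator_monotone f,
      f 1 = 1 &
      (forall t, 0 < t -> t * f t^-1 = f t)].

Definition f0 (f : R -> R) : R := lim (f x @[x --> (0:R)^'+]).

Definition Fop_r (f : R -> R) : Prop := Fop f /\ f0 f != 0.

Definition ftilde (f : R -> R) (x : R) : R :=
  2^-1 * ((x + 1) - (x - 1) ^+ 2 * (f0 f / f x)).

Definition mf (f : R -> R) (x y : R) : R := x * f (y / x).

Definition strict_density {n} (rho : 'M[C]_n) : Prop :=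
  pd rho /\ \tr rho = 1.

(* m_f(L_rho, R_rho)^{-1} (X), computed in the orthonormal eigenbasis given by
   the columns of U, where rho = U diag(lam) U^* *)
Definition mf_LR_inv {n} (f : R -> R) (U : 'M[C]_n) (lam : 'I_n -> R)
    (X : 'M[C]_n) : 'M[C]_n :=
  U *m (\matrix_(i, j) ((adj U *m X *m U) i j / (mf f (lam i) (lam j))%:C))
    *m adj U.

Definition fnorm2 {n} (f : R -> R) (U : 'M[C]_n) (lam : 'I_n -> R)
    (X : 'M[C]_n) : C :=
  \tr (adj X *m mf_LR_inv f U lam X).

Definition finfo {n} (f : R -> R) (rho : 'M[C]_n) (U : 'M[C]_n)
    (lam : 'I_n -> R) (A : 'M[C]_n) : C :=
  (f0 f / 2)%:C * fnorm2 f U lam ('i *: (rho *m A - A *m rho)).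

End Defs.

From HB Require Import structures.
From mathcomp Require Import all_boot all_order all_algebra.
From mathcomp Require Import sesquilinear spectral.
From mathcomp Require Import complex.
From mathcomp Require Import all_classical all_reals all_analysis.
From mathcomp Require Import ring.
Set Implicit Arguments. Unset Strict Implicit. Unset Printing Implicit Defensive.
Import Order.TTheory GRing.Theory Num.Theory.
Local Open Scope ring_scope.
Local Open Scope complex_scope.

(* In an orthonormal eigenbasis of rho = U diag(lam) U^*, with B := U^* A U,
   I^f_rho(A) = sum_{i,j} f(0)/2 (lam_i - lam_j)^2 / m_f(lam_i, lam_j) |B_ij|^2.
   Writing x = lam_j / lam_i, the coefficient equals
   lam_i/2 (x - 1)^2 f(0)/f(x) = lam_i/2 ((x + 1) - 2 ftilde f x),
   so ftilde g <= ftilde f compares the two sums term by term. *)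

Section FInformation.
Variable R : realType.
Local Notation C := R[i].
Local Open Scope sesquilinear_scope.

Lemma adjE m n (M : 'M[C]_(m, n)) i j : adj M i j = (M j i)^*%R.
Proof. by rewrite /adj !mxE. Qed.

Lemma adjM m n p (A : 'M[C]_(m, n)) (B : 'M[C]_(n, p)) :
  adj (A *m B) = adj B *m adj A.
Proof. by rewrite /adj trmx_mul map_mxM. Qed.

Lemma adjK m n (A : 'M[C]_(m, n)) : adj (adj A) = A.
Proof. exact: trmxCK. Qed.

Lemma unitarymx_adjmxK n (U : 'M[C]_n) : U \is unitarymx -> adj U *m U = 1%:M.
Proof. by move=> Uu; have := mulmxKtV 1%:M Uu erefl; rewrite mul1mx. Qed.

Lemma adj_delta_mx n (i : 'I_n) :
  adj (delta_mx 0 i : 'M[C]_(1, n)) = delta_mx i 0.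
Proof.
apply/matrixP=> k l; rewrite adjE !mxE andbC.
by apply: conj_Creal; apply: realn.
Qed.

Lemma pd_eigenvalue_gt0 n (U : 'M[C]_n) (lam : 'I_n -> R) i :
  U \is unitarymx -> pd (U *m rdiag lam *m adj U) -> 0 < lam i.
Proof.
move=> Uu Hpd; have WU := unitarymx_adjmxK Uu.
pose v : 'rV[C]_n := delta_mx 0 i *m adj U.
have v_neq0 : v != 0.
  apply: contraTneq isT => v0; have := congr1 (mulmx^~ U) v0.
  rewrite /v -mulmxA WU mulmx1 mul0mx => /matrixP /(_ 0 i).
  by rewrite !mxE !eqxx => /eqP; rewrite oner_eq0.
have := Hpd v v_neq0; rewrite /v adjM adjK !mulmxA.
rewrite -(mulmxA _ (adj U) U) WU mulmx1 -(mulmxA _ (adj U) U) WU mulmx1.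
by rewrite adj_delta_mx -rowE -colE !mxE eqxx mulr1n ltcR.
Qed.

Lemma fnorm2_eigenbasisE (h : R -> R) n (U : 'M[C]_n) (lam : 'I_n -> R)
    (X : 'M[C]_n) :
  fnorm2 h U lam X = \sum_i \sum_j ((adj U *m X *m U) j i)^*%R *
    ((adj U *m X *m U) j i / (mf h (lam j) (lam i))%:C).
Proof.
rewrite /fnorm2 /mf_LR_inv !mulmxA mxtrace_mulC !mulmxA.
have -> : adj U *m adj X *m U = adj (adj U *m X *m U) by rewrite !adjM adjK mulmxA.
by apply: eq_bigr => i _; rewrite mxE; apply: eq_bigr => j _; rewrite adjE !mxE.
Qed.

Lemma commutator_eigenbasisE n (rho U A : 'M[C]_n) (lam : 'I_n -> R) j i :
  U \is unitarymx -> rho = U *m rdiag lam *m adj U ->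
  (adj U *m ('i *: (rho *m A - A *m rho)) *m U) j i
    = 'i * ((lam j - lam i)%:C * (adj U *m A *m U) j i).
Proof.
move=> Uu rhoE; have WU := unitarymx_adjmxK Uu.
have rhoUl : adj U *m rho = rdiag lam *m adj U by rewrite rhoE !mulmxA WU mul1mx.
have rhoUr : rho *m U = U *m rdiag lam by rewrite rhoE -!mulmxA WU mulmx1.
rewrite -scalemxAr -scalemxAl mulmxBr mulmxBl.
rewrite !mulmxA rhoUl -(mulmxA _ rho U) rhoUr !mulmxA.
rewrite -!(mulmxA (rdiag lam *m adj U)) -!(mulmxA (rdiag lam)) (mulmxA (adj U) A U).
by rewrite /rdiag mul_diag_mx mul_mx_diag !mxE rmorphB /=; ring.
Qed.

Definition finfo_coef (h : R -> R) (a b : R) : R :=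
  f0 h / 2 * (a - b) ^+ 2 / mf h a b.

Lemma finfo_termE (h : R -> R) (a b : R) (z : C) :
  (f0 h / 2)%:C * (('i * ((a - b)%:C * z))^*%R * ('i * ((a - b)%:C * z) / (mf h a b)%:C))
  = (finfo_coef h a b)%:C * (z * z^*%R).
Proof.
rewrite /finfo_coef; move: (mf h a b) (a - b) => m r.
have [->|m_neq0] := eqVneq m 0; first by rewrite !invr0 !mulr0 !mul0r.
have r_conj : (r%:C)^*%R = r%:C by apply: conj_Creal; apply/complex_realP; exists r.
have ii : 'i * 'i = -1 :> C by rewrite -expr2 sqrCi.
rewrite !rmorphM /= conjCi r_conj ?rmorphXn ?fmorphV /=.
transitivity (- ('i * 'i) * ((f0 h)%:C / 2%:C * (r%:C * r%:C) / m%:C * (z * z^*%R)));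
  first by ring.
by rewrite ii opprK mul1r; ring.
Qed.

Lemma finfoE (h : R -> R) n (U A : 'M[C]_n) (lam : 'I_n -> R) :
  U \is unitarymx ->
  finfo h (U *m rdiag lam *m adj U) U lam A =
    \sum_i \sum_j (finfo_coef h (lam j) (lam i))%:C *
      ((adj U *m A *m U) j i * ((adj U *m A *m U) j i)^*%R).
Proof.
move=> Uu; rewrite /finfo fnorm2_eigenbasisE mulr_sumr; apply: eq_bigr => i _.
rewrite mulr_sumr; apply: eq_bigr => j _.
by rewrite (@commutator_eigenbasisE _ _ U A lam j i Uu erefl) finfo_termE.
Qed.

Lemma finfo_coef_le (f g : R -> R) (a b : R) :
  (forall x, 0 < x -> 0 < f x) -> (forall x, 0 < x -> 0 < g x) ->
  (forall x, 0 < x -> ftilde g x <= ftilde f x) ->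
  0 < a -> 0 < b -> finfo_coef f a b <= finfo_coef g a b.
Proof.
move=> fpos gpos fg_le a_gt0 b_gt0.
have x_gt0 : 0 < b / a by rewrite divr_gt0.
have coefE h : 0 < h (b / a) ->
    finfo_coef h a b = a / 2 * ((b / a - 1) ^+ 2 * (f0 h / h (b / a))).
  by move=> hpos; rewrite /finfo_coef /mf; field; rewrite !gt_eqF.
rewrite !coefE ?fpos ?gpos //; apply: ler_wpM2l; first by rewrite divr_ge0 ?ltW.
by move: (fg_le _ x_gt0); rewrite /ftilde ler_pM2l ?invr_gt0 ?ltr0n // lerD2l lerN2.
Qed.

End FInformation.

Theorem mainTheorem4 (R : realType) (f g : R -> R) :
  Fop_r f -> Fop_r g ->
  (forall x : R, 0 < x -> ftilde g x <= ftilde f x) ->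
  forall (n : nat) (rho : 'M[R[i]]_n) (A : 'M[R[i]]_n)
         (U : 'M[R[i]]_n) (lam : 'I_n -> R),
    strict_density rho ->
    U \is unitarymx -> rho = U *m rdiag lam *m adj U ->
    selfadjoint A ->
    finfo f rho U lam A <= finfo g rho U lam A.
Proof.
move=> [[fpos _ _ _] _] [[gpos _ _ _] _] fg_le n rho A U lam [rho_pd _] Uu rhoE _.
subst rho; have lam_gt0 i := pd_eigenvalue_gt0 i Uu rho_pd.
rewrite !finfoE //; apply: ler_sum => i _; apply: ler_sum => j _.
apply: ler_wpM2r; first exact: mul_conjC_ge0.
by rewrite lecR finfo_coef_le.
Qed.
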